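(* Let $f: \mathbb{T} \to \mathbb{T}$ be as in the context. Assume $\rho(f) = p/q$, with $p,q$ coprime positive integers, or $p=0$, $q=1$. If $q$ is even then $f^q=\mathrm{id}$, that is, all orbits are periodic with primitive period $q$; moreover, $a_0$ and $a_1$ are in the same periodic orbit. If $q$ is odd then, for any non-degenerate interval $I \subset \mathbb{T}$, $f^q|_I \ne \mathrm{id}|_I$; also $a_0$ and $a_1$ are not in the same periodic orbit.
   Context: Setting: the internal-wave billiard (unit-speed point particle, reflected so that angles of incident and reflected velocities with the vertical are equal) in a rectangular trapezoid of height $1/2$ with horizontal bases, vertical left leg, shorter base of length $\ell>0$, and slanted leg making angle $\alpha$ as in the paper's convention; the initial direction $\theta$ (angle with the vertical, particle starting on the vertical leg) satisfies $\alpha<\theta<\pi/2$ and $\theta\ge\arctan(2\ell+\tan\alpha)$. $f:\mathbb{T}\to\mathbb{T}$ ($\mathbb{T}=\mathbb{R}/\mathbb{Z}\cong[-1/2,1/2)$) is the first-return map of the unfolded linear flow to a horizontal cross-section of length 1; it is an orientation-preserving piecewise-linear circle homeomorphism whose derivative takes only the values $\Lambda$ and $\Lambda^{-1}$, $\Lambda=\sin(\theta+\alpha)/\sin(\theta-\alpha)>1$. Its two break points are $a_0=(\tan\theta-2\ell)/(2\tan\theta)\in(0,1/2)$ (where $f'$ jumps up from $\Lambda^{-1}$ to $\Lambda$) and $a_1=-(2\ell+\tan\alpha)/(2\tan\theta)\in(-1/2,0)$ (where $f'$ jumps down), with $f(a_j)=-a_j$. $\rho(f)\in[0,1)$ is the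 Poincaré rotation number. *)

From Stdlib Require Import Reals Lra Lia Arith ZArith.
Open Scope R_scope.

(* Points of the circle T = R/Z are represented by real numbers;
   x and y denote the same point of T iff x - y is an integer. *)
Definition is_int (y : R) : Prop := exists z : Z, y = IZR z.
Definition same_pt (x y : R) : Prop := is_int (x - y).

(* floor, via Stdlib's Int_part (= up r - 1, which is the floor) *)
Definition floorR (r : R) : R := IZR (Int_part r).

Definition Lam (theta alpha : R) : R := sin (theta + alpha) / sin (theta - alpha).
Definition a0 (theta ell : R) : R := (tan theta - 2 * ell) / (2 * tan theta).
Definition a1 (theta alpha ell : R) : R := - (2 * ell + tan alpha) / (2 * tan theta).

(* The lift F : R -> R of f on the fundamental domain [a1, a1 + 1):
   slope Lam^-1 on [a1, a0], slope Lam on [a0, a1 + 1], F(a1) = -a1,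
   F(a0) = 1 - a0 (= -a0 in T); extended by F(x + n) = F(x) + n. *)
Definition F_piece (theta alpha ell y : R) : R :=
  let L := Lam theta alpha in
  let b0 := a0 theta ell in
  let b1 := a1 theta alpha ell in
  if Rle_dec y b0 then - b1 + (y - b1) / L
  else 1 - b0 + L * (y - b0).

Definition F (theta alpha ell x : R) : R :=
  let n := floorR (x - a1 theta alpha ell) in
  F_piece theta alpha ell (x - n) + n.

Definition Fiter (theta alpha ell : R) (n : nat) (x : R) : R :=
  Nat.iter n (F theta alpha ell) x.

(* Poincare rotation number rho(f) in [0,1): fractional part of
   lim_n (F^n(x) - x)/n  (taken at x = 0; independent of x and of the lift). *)
Definition rotation_number (theta alpha ell rho : R) : Prop :=
  exists r : R,
    Un_cv (fun n => (Fiter theta alpha ell n 0 - 0) / INR n) r /\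
    rho = r - floorR r.

Definition admissible (theta alpha ell : R) : Prop :=
  0 < ell /\ 0 < alpha /\ alpha < theta /\ theta < PI / 2 /\
  atan (2 * ell + tan alpha) <= theta.

From Stdlib Require Import Reals Lra Lia Arith ZArith Classical.
Open Scope R_scope.

(* Let P/q be the lifted rotation number (q > 0, P coprime to q) and call z
   periodic when F^q z = z + P; every periodic orbit then has minimal period q.
   The map G x := - F x is an involution with F^k (G (F^k x)) = G x (time
   reversibility), and the points that G moves by an integer are exactly the
   break points a0 + Z and a1 + Z.  On an interval none of whose points reaches
   a break point in fewer than q steps, F^q is affine with slope L^a / L^b,
   a + b = q; where an orbit segment of length q meets a0 + Z (resp. a1 + Z)
   once, the slope of F^q jumps by the factor L^2 (resp. L^-2).

   If q is odd such a slope is never 1, so F^q - P is nowhere the identity; and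
   if F^k a0 = a1 + j, reversibility gives F^(2k) a0 = a0 + 2j - 1, hence q | k
   and a0 = a1 mod 1, which is false.

   If q is even and a0 is not periodic, let (u, v) be the component of the
   non-periodic set containing a0.  It is invariant under x |-> G x + 1, which
   makes the one-sided slopes of F^q at u and v inverse to each other.  Inside
   (u, v) each of a0 + Z and a1 + Z is reached by at most one orbit segment of
   length < q, so the slope at v is the slope at u times L^2 or 1.  The slope at
   u is then 1/L, against the parity of q, or 1, making the points near u
   periodic.  So a0 is periodic; G then fixes F^(q/2) a0 up to an integer, so
   F^(q/2) a0 lies in a1 + Z, all break points are periodic, and F^q, affine on
   each component of the non-periodic set and equal to id + P at its ends, is
   id + P inside it as well: there is no such component. *)

Lemma floorR_spec r : floorR r <= r < floorR r + 1.
Proof. unfold floorR. destruct (base_Int_part r). lra. Qed.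

Lemma floorR_unique (z : Z) r : IZR z <= r < IZR z + 1 -> floorR r = IZR z.
Proof.
  intros Hz. pose proof (floorR_spec r) as Hr. unfold floorR in *.
  enough (Int_part r = z) as -> by reflexivity.
  assert (Int_part r < z + 1)%Z by (apply lt_IZR; rewrite plus_IZR; lra).
  assert (z < Int_part r + 1)%Z by (apply lt_IZR; rewrite plus_IZR; lra).
  lia.
Qed.

Lemma floorR_add_int r (k : Z) : floorR (r + IZR k) = floorR r + IZR k.
Proof.
  pose proof (floorR_spec r). unfold floorR in *.
  rewrite <- plus_IZR. apply floorR_unique. rewrite plus_IZR. lra.
Qed.

Lemma int_floor_exists r : exists n : Z, IZR n <= r < IZR n + 1.
Proof. exists (Int_part r). exact (floorR_spec r). Qed.

Lemma int_ceil_exists r : exists n : Z, IZR n < r <= IZR n + 1.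
Proof.
  destruct (int_floor_exists (- r)) as [m Hm]. exists (- m - 1)%Z.
  rewrite minus_IZR, opp_IZR. lra.
Qed.

Lemma IZR_abs_lt_1 (n : Z) : -1 < IZR n < 1 -> n = 0%Z.
Proof. intros [H1 H2]. apply lt_IZR in H1. apply lt_IZR in H2. lia. Qed.

Lemma Zgcd_of_nat_coprime a b : Nat.gcd a b = 1%nat -> Z.gcd (Z.of_nat a) (Z.of_nat b) = 1%Z.
Proof.
  intros Hab. destruct a as [|a].
  { rewrite Nat.gcd_0_l in Hab. subst. reflexivity. }
  apply Z.bezout_1_gcd.
  destruct (Nat.gcd_bezout_pos (S a) b ltac:(lia)) as [x [y Hxy]].
  rewrite Hab in Hxy. exists (Z.of_nat x), (- Z.of_nat y)%Z. lia.
Qed.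

Lemma Nat_divide_of_Z d k : (Z.of_nat d | Z.of_nat k)%Z -> Nat.divide d k.
Proof.
  intros [c Hc]. destruct (Nat.eq_dec d 0) as [->|Hd].
  - exists 0%nat. lia.
  - exists (Z.to_nat c). nia.
Qed.

Lemma odd_divide_double q k : Nat.Odd q -> Nat.divide q (k + k) -> Nat.divide q k.
Proof.
  intros [m Hm] Hq. apply (Nat.gauss q 2 k); [now replace (2 * k)%nat with (k + k)%nat by lia|].
  rewrite Nat.gcd_comm, Hm. replace (2 * m + 1)%nat with (1 + m * 2)%nat by lia.
  rewrite Nat.gcd_add_mult_diag_r. reflexivity.
Qed.

Lemma exists_pos_le3 a b c : 0 < a -> 0 < b -> 0 < c ->
  exists e, 0 < e /\ e <= a /\ e <= b /\ e <= c.
Proof.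
  intros Ha Hb Hc. exists (Rmin a (Rmin b c)).
  pose proof (Rmin_l a (Rmin b c)). pose proof (Rmin_r a (Rmin b c)).
  pose proof (Rmin_l b c). pose proof (Rmin_r b c).
  repeat split; try lra. repeat apply Rmin_pos; assumption.
Qed.

Lemma Rabs_le_inv_INR_eq_0 a : (forall j, (0 < j)%nat -> Rabs a <= / INR j) -> a = 0.
Proof.
  intros Ha. destruct (Req_dec a 0) as [|Ha0]; [assumption|].
  destruct (archimed_cor1 (Rabs a)) as [j [Hj Hj0]]; [now apply Rabs_pos_lt|].
  specialize (Ha j Hj0). lra.
Qed.

Lemma Un_cv_mul_subseq_ge (w : nat -> R) r n d :
  Un_cv w r -> (0 < n)%nat -> (forall j, (0 < j)%nat -> d <= w (j * n)%nat) -> d <= r.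
Proof.
  intros Hw Hn Hd. destruct (Rle_or_lt d r) as [|Hlt]; [assumption|].
  destruct (Hw (d - r)) as [N HN]; [lra|].
  specialize (HN (S N * n)%nat ltac:(nia)). specialize (Hd (S N) ltac:(lia)).
  unfold R_dist in HN. apply Rabs_def2 in HN. lra.
Qed.

Lemma Un_cv_mul_subseq_le (w : nat -> R) r n d :
  Un_cv w r -> (0 < n)%nat -> (forall j, (0 < j)%nat -> w (j * n)%nat <= d) -> r <= d.
Proof.
  intros Hw Hn Hd.
  enough (- d <= - r) by lra.
  apply (Un_cv_mul_subseq_ge (opp_seq w) _ n); [now apply CV_opp | assumption |].
  intros j Hj. unfold opp_seq. specialize (Hd j Hj). lra.
Qed.

Lemma lipschitz_continuity (f : R -> R) K :
  0 < K -> (forall x y, Rabs (f x - f y) <= K * Rabs (x - y)) -> continuity f.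
Proof.
  intros HK Hf x eps Heps. exists (eps / K). split; [apply Rdiv_lt_0_compat; lra|].
  intros y [_ Hy]. simpl in *. unfold R_dist in *.
  apply (Rle_lt_trans _ _ _ (Hf y x)).
  apply (Rmult_lt_compat_l K) in Hy; [|lra].
  replace (K * (eps / K)) with eps in Hy by (field; lra). lra.
Qed.

Lemma continuity_last_zero_below (g : R -> R) x :
  continuity g -> (exists z, z <= x /\ g z = 0) ->
  exists u, u <= x /\ g u = 0 /\ forall w, u < w <= x -> g w <> 0.
Proof.
  intros Hg Hne. set (E := fun w => w <= x /\ g w = 0).
  assert (Hb : bound E) by (exists x; intros w [Hw _]; exact Hw).
  destruct (completeness E Hb Hne) as [u [Hub Hlub]].
  assert (Hux : u <= x) by (apply Hlub; intros w [Hw _]; exact Hw).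
  assert (Hu : g u = 0).
  { apply NNPP. intros Hgu.
    destruct (Hg u (Rabs (g u))) as [d [Hd Hnear]]; [now apply Rabs_pos_lt|].
    enough (u <= u - d / 2) by lra.
    apply Hlub. intros w [Hwx Hgw].
    destruct (Rle_or_lt w (u - d / 2)) as [|Hw]; [assumption|].
    assert (w <= u) by (apply Hub; split; assumption).
    destruct (Req_dec w u) as [->|Hwu]; [contradiction|].
    specialize (Hnear w). simpl in Hnear. unfold R_dist, D_x, no_cond in Hnear.
    rewrite Hgw, Rminus_0_l, Rabs_Ropp in Hnear.
    assert (Rabs (g u) < Rabs (g u)); [|lra].
    apply Hnear. repeat split; [auto|]. rewrite Rabs_left1; lra. }
  exists u. repeat split; [assumption | assumption |].
  intros w [Hw1 Hw2] Hgw. assert (w <= u) by (apply Hub; split; assumption). lra.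
Qed.

Lemma continuity_first_zero_above (g : R -> R) x :
  continuity g -> (exists z, x <= z /\ g z = 0) ->
  exists v, x <= v /\ g v = 0 /\ forall w, x <= w < v -> g w <> 0.
Proof.
  intros Hg [z [Hz Hgz]].
  assert (Hcont : continuity (fun w => g (- w))).
  { apply (continuity_comp Ropp g); [apply continuity_opp, derivable_continuous, derivable_id | exact Hg]. }
  destruct (continuity_last_zero_below _ (- x) Hcont) as [u [Hu [Hgu Hnz]]].
  { exists (- z). rewrite Ropp_involutive. split; [lra | exact Hgz]. }
  exists (- u). repeat split; [lra | exact Hgu |].
  intros w Hw. rewrite <- (Ropp_involutive w). apply Hnz. lra.
Qed.

(** * One-sided slopes *)

Definition right_germ (g : R -> R) (t s : R) : Prop :=
  exists d, 0 < d /\ forall z, t <= z <= t + d -> g z = g t + s * (z - t).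
Definition left_germ (g : R -> R) (t s : R) : Prop :=
  exists d, 0 < d /\ forall z, t - d <= z <= t -> g z = g t + s * (z - t).
Definition affine_on (g : R -> R) (x y s : R) : Prop :=
  forall z, x <= z <= y -> g z = g x + s * (z - x).

Lemma right_germ_ext g h t s : (forall z, g z = h z) -> right_germ g t s -> right_germ h t s.
Proof. intros E [d [Hd Hg]]. exists d. split; [exact Hd|]. intros z Hz. rewrite <- !E. auto. Qed.

Lemma left_germ_ext g h t s : (forall z, g z = h z) -> left_germ g t s -> left_germ h t s.
Proof. intros E [d [Hd Hg]]. exists d. split; [exact Hd|]. intros z Hz. rewrite <- !E. auto. Qed.

Lemma right_germ_comp f g t s s' :
  0 < s -> right_germ f t s -> right_germ g (f t) s' -> right_germ (fun z => g (f z)) t (s' * s).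
Proof.
  intros Hs [d1 [Hd1 Hf]] [d2 [Hd2 Hg]].
  exists (Rmin d1 (d2 / s)). split; [apply Rmin_pos; [lra | apply Rdiv_lt_0_compat; lra]|].
  intros z Hz. pose proof (Rmin_l d1 (d2 / s)). pose proof (Rmin_r d1 (d2 / s)).
  assert (Hzs : s * (z - t) <= d2).
  { replace d2 with (s * (d2 / s)) by (field; lra). apply Rmult_le_compat_l; lra. }
  rewrite (Hf z) by lra. rewrite Hg by nra. ring.
Qed.

Lemma left_germ_comp f g t s s' :
  0 < s -> left_germ f t s -> left_germ g (f t) s' -> left_germ (fun z => g (f z)) t (s' * s).
Proof.
  intros Hs [d1 [Hd1 Hf]] [d2 [Hd2 Hg]].
  exists (Rmin d1 (d2 / s)). split; [apply Rmin_pos; [lra | apply Rdiv_lt_0_compat; lra]|].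
  intros z Hz. pose proof (Rmin_l d1 (d2 / s)). pose proof (Rmin_r d1 (d2 / s)).
  assert (Hzs : s * (t - z) <= d2).
  { replace d2 with (s * (d2 / s)) by (field; lra). apply Rmult_le_compat_l; lra. }
  rewrite (Hf z) by lra. rewrite Hg by nra. ring.
Qed.

Lemma right_germ_unique g t s s' : right_germ g t s -> right_germ g t s' -> s = s'.
Proof.
  intros [d [Hd Hs]] [d' [Hd' Hs']]. pose proof (Rmin_l d d'). pose proof (Rmin_r d d').
  set (e := Rmin d d') in *. assert (0 < e) by (apply Rmin_pos; assumption).
  specialize (Hs (t + e) ltac:(lra)). specialize (Hs' (t + e) ltac:(lra)).
  apply (Rmult_eq_reg_r e); lra.
Qed.

Lemma left_germ_unique g t s s' : left_germ g t s -> left_germ g t s' -> s = s'.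
Proof.
  intros [d [Hd Hs]] [d' [Hd' Hs']]. pose proof (Rmin_l d d'). pose proof (Rmin_r d d').
  set (e := Rmin d d') in *. assert (0 < e) by (apply Rmin_pos; assumption).
  specialize (Hs (t - e) ltac:(lra)). specialize (Hs' (t - e) ltac:(lra)).
  apply (Rmult_eq_reg_r (- e)); lra.
Qed.

Lemma right_germ_incr_pos g t s :
  (forall x y, x < y -> g x < g y) -> right_germ g t s -> 0 < s.
Proof.
  intros Hg [d [Hd E]]. specialize (Hg t (t + d) ltac:(lra)).
  rewrite (E (t + d)) in Hg by lra. nra.
Qed.

Lemma affine_on_right_germ g x y s : x < y -> affine_on g x y s -> right_germ g x s.
Proof. intros Hxy Hg. exists (y - x). split; [lra|]. intros z Hz. apply Hg. lra. Qed.

Lemma affine_on_left_germ g x y s : x < y -> affine_on g x y s -> left_germ g y s.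
Proof.
  intros Hxy Hg. exists (y - x). split; [lra|]. intros z Hz.
  rewrite (Hg z), (Hg y) by lra. ring.
Qed.

Lemma affine_on_comp f g x y s s' :
  0 < s -> affine_on f x y s -> affine_on g (f x) (f y) s' ->
  affine_on (fun z => g (f z)) x y (s' * s).
Proof.
  intros Hs Hf Hg z Hz. pose proof (Hf y ltac:(lra)).
  rewrite (Hf z Hz), Hg by nra. ring.
Qed.


(** * Degree-one lifts *)

Definition has_rotation_limit (f : R -> R) (r : R) : Prop :=
  Un_cv (fun n => (Nat.iter n f 0 - 0) / INR n) r.

Definition periodic_pt (f : R -> R) (q : nat) (P : Z) (z : R) : Prop :=
  Nat.iter q f z = z + IZR P.

Definition periodic_gap (f : R -> R) (q : nat) (P : Z) (u v : R) : Prop :=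
  u < v /\ periodic_pt f q P u /\ periodic_pt f q P v /\
  forall z, u < z < v -> ~ periodic_pt f q P z.

Section DegreeOneLift.

Context {f : R -> R}.
Hypothesis f_incr : forall x y, x < y -> f x < f y.
Hypothesis f_add_int : forall x (k : Z), f (x + IZR k) = f x + IZR k.
Hypothesis f_cont : continuity f.

Local Notation it n := (Nat.iter n f).

Lemma iter_add_int n x k : it n (x + IZR k) = it n x + IZR k.
Proof. induction n as [|n IH]; [reflexivity|]. simpl. rewrite IH. apply f_add_int. Qed.

Lemma iter_incr n x y : x < y -> it n x < it n y.
Proof. induction n as [|n IH]; intros Hxy; [exact Hxy|]. apply f_incr, IH, Hxy. Qed.

Lemma iter_le n x y : x <= y -> it n x <= it n y.
Proof. intros [Hxy|<-]; [left; now apply iter_incr | lra]. Qed.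

Lemma iter_inj n x y : it n x = it n y -> x = y.
Proof.
  intros E. destruct (Rtotal_order x y) as [H|[H|H]]; [|exact H|];
    apply (iter_incr n) in H; lra.
Qed.

Lemma iter_cont n : continuity (it n).
Proof.
  induction n as [|n IH]; [exact (derivable_continuous _ derivable_id)|].
  exact (continuity_comp _ _ IH f_cont).
Qed.

Lemma iter_displacement n x c :
  it n x = x + c -> forall z, z + (c - 1) <= it n z <= z + (c + 1).
Proof.
  intros Hx z. destruct (int_floor_exists (z - x)) as [k Hk].
  pose proof (iter_le n (x + IZR k) z ltac:(lra)).
  pose proof (iter_le n z (x + IZR (k + 1)) ltac:(rewrite plus_IZR; lra)).
  rewrite !iter_add_int, Hx, plus_IZR in *. lra.
Qed.

Lemma iter_mul_periodic n x m j : it n x = x + IZR m -> it (j * n) x = x + INR j * IZR m.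
Proof.
  intros Hx. induction j as [|j IH]; [simpl; ring|].
  replace (S j * n)%nat with (n + j * n)%nat by lia.
  rewrite Nat.iter_add, IH, INR_IZR_INZ, <- mult_IZR, iter_add_int, Hx, S_INR, INR_IZR_INZ, mult_IZR.
  ring.
Qed.

Lemma iter_mul_lower n c j x : (forall z, z + c <= it n z) -> x + INR j * c <= it (j * n) x.
Proof.
  intros Hc. induction j as [|j IH]; [simpl; lra|].
  replace (S j * n)%nat with (n + j * n)%nat by lia.
  rewrite Nat.iter_add, S_INR. specialize (Hc (it (j * n) x)). lra.
Qed.

Lemma iter_mul_upper n c j x : (forall z, it n z <= z + c) -> it (j * n) x <= x + INR j * c.
Proof.
  intros Hc. induction j as [|j IH]; [simpl; lra|].
  replace (S j * n)%nat with (n + j * n)%nat by lia.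
  rewrite Nat.iter_add, S_INR. specialize (Hc (it (j * n) x)). lra.
Qed.

Lemma iter_mul_below n x m j :
  it n x < x + IZR m -> (0 < j)%nat -> it (j * n) x < x + INR j * IZR m.
Proof.
  intros Hx Hj. induction j as [|j IH]; [lia|].
  destruct (Nat.eq_dec j 0) as [->|Hj0]; [simpl; rewrite Nat.add_0_r; lra|].
  replace (S j * n)%nat with (n + j * n)%nat by lia.
  rewrite Nat.iter_add, S_INR.
  pose proof (iter_incr n _ _ (IH ltac:(lia))) as Hlt.
  rewrite INR_IZR_INZ, <- mult_IZR, iter_add_int, mult_IZR, <- INR_IZR_INZ in Hlt. lra.
Qed.

Lemma iter_mul_above n x m j :
  x + IZR m < it n x -> (0 < j)%nat -> x + INR j * IZR m < it (j * n) x.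
Proof.
  intros Hx Hj. induction j as [|j IH]; [lia|].
  destruct (Nat.eq_dec j 0) as [->|Hj0]; [simpl; rewrite Nat.add_0_r; lra|].
  replace (S j * n)%nat with (n + j * n)%nat by lia.
  rewrite Nat.iter_add, S_INR.
  pose proof (iter_incr n _ _ (IH ltac:(lia))) as Hlt.
  rewrite INR_IZR_INZ, <- mult_IZR, iter_add_int, mult_IZR, <- INR_IZR_INZ in Hlt. lra.
Qed.

Lemma periodic_of_iter_mul n t x m :
  (0 < t)%nat -> it (t * n) x = x + INR t * IZR m -> it n x = x + IZR m.
Proof.
  intros Ht E. destruct (Rtotal_order (it n x) (x + IZR m)) as [H|[H|H]]; [|exact H|].
  - pose proof (iter_mul_below n x m t H Ht). lra.
  - pose proof (iter_mul_above n x m t H Ht). lra.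
Qed.

Lemma rotation_lower r n c :
  has_rotation_limit f r -> (0 < n)%nat -> (forall z, z + c <= it n z) -> c / INR n <= r.
Proof.
  intros Hr Hn Hc. apply (Un_cv_mul_subseq_ge _ r n _ Hr Hn). intros j Hj.
  pose proof (iter_mul_lower n c j 0 Hc).
  assert (0 < INR j) by (apply lt_0_INR; lia). assert (0 < INR n) by (apply lt_0_INR; lia).
  rewrite mult_INR. apply (Rmult_le_reg_r (INR j * INR n)); [nra|].
  field_simplify; lra.
Qed.

Lemma rotation_upper r n c :
  has_rotation_limit f r -> (0 < n)%nat -> (forall z, it n z <= z + c) -> r <= c / INR n.
Proof.
  intros Hr Hn Hc. apply (Un_cv_mul_subseq_le _ r n _ Hr Hn). intros j Hj.
  pose proof (iter_mul_upper n c j 0 Hc).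
  assert (0 < INR j) by (apply lt_0_INR; lia). assert (0 < INR n) by (apply lt_0_INR; lia).
  rewrite mult_INR. apply (Rmult_le_reg_r (INR j * INR n)); [nra|].
  field_simplify; lra.
Qed.

Lemma rotation_of_periodic r n x m :
  has_rotation_limit f r -> (0 < n)%nat -> it n x = x + IZR m -> r = IZR m / INR n.
Proof.
  intros Hr Hn Hx. enough (r - IZR m / INR n = 0) by lra.
  apply Rabs_le_inv_INR_eq_0. intros j Hj.
  assert (0 < INR j) by (apply lt_0_INR; lia). assert (1 <= INR n) by (apply (le_INR 1); lia).
  assert (Hjn : (0 < j * n)%nat) by lia.
  pose proof (iter_displacement (j * n) x (INR j * IZR m)) as Hdisp.
  specialize (Hdisp (iter_mul_periodic n x m j Hx)).
  pose proof (rotation_lower r _ _ Hr Hjn (fun z => proj1 (Hdisp z))) as Hlo.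
  pose proof (rotation_upper r _ _ Hr Hjn (fun z => proj2 (Hdisp z))) as Hhi.
  rewrite mult_INR in Hlo, Hhi.
  replace ((INR j * IZR m - 1) / (INR j * INR n)) with (IZR m / INR n - / (INR j * INR n)) in Hlo
    by (field; lra).
  replace ((INR j * IZR m + 1) / (INR j * INR n)) with (IZR m / INR n + / (INR j * INR n)) in Hhi
    by (field; lra).
  assert (/ (INR j * INR n) <= / INR j).
  { apply Rinv_le_contravar; [lra|]. nra. }
  apply Rabs_le. lra.
Qed.

Lemma periodic_point_exists q P :
  has_rotation_limit f (IZR P / INR q) -> (0 < q)%nat -> exists z, it q z = z + IZR P.
Proof.
  intros Hr Hq. set (D z := it q z - z - IZR P).
  assert (HD : continuity D).
  { apply continuity_minus; [apply continuity_minus; [apply iter_cont | apply derivable_continuous, derivable_id]|].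
    apply derivable_continuous, derivable_const. }
  assert (Hper : forall z, exists z', 0 <= z' <= 1 /\ D z = D z').
  { intros z. destruct (int_floor_exists z) as [k Hk]. exists (z - IZR k). split; [lra|].
    unfold D. replace z with (z - IZR k + IZR k) at 1 2 by ring. rewrite iter_add_int. ring. }
  assert (0 < INR q) by (apply lt_0_INR; lia).
  destruct (continuity_ab_min D 0 1 ltac:(lra) (fun c _ => HD c)) as [a [Ha Ha01]].
  destruct (continuity_ab_maj D 0 1 ltac:(lra) (fun c _ => HD c)) as [b [Hb Hb01]].
  destruct (Rlt_or_le 0 (D a)) as [Hpos|Hnpos].
  { exfalso. assert (Hlow : forall z, z + (IZR P + D a) <= it q z).
    { intros z. destruct (Hper z) as [z' [Hz' E]]. specialize (Ha z' Hz'). unfold D in *. lra. }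
    pose proof (rotation_lower _ _ _ Hr Hq Hlow).
    assert (IZR P / INR q < (IZR P + D a) / INR q) by (apply Rmult_lt_compat_r; [now apply Rinv_0_lt_compat | lra]).
    lra. }
  destruct (Rlt_or_le (D b) 0) as [Hneg|Hnneg].
  { exfalso. assert (Hup : forall z, it q z <= z + (IZR P + D b)).
    { intros z. destruct (Hper z) as [z' [Hz' E]]. specialize (Hb z' Hz'). unfold D in *. lra. }
    pose proof (rotation_upper _ _ _ Hr Hq Hup).
    assert ((IZR P + D b) / INR q < IZR P / INR q) by (apply Rmult_lt_compat_r; [now apply Rinv_0_lt_compat | lra]).
    lra. }
  assert (Hab : D (Rmin a b) * D (Rmax a b) <= 0).
  { unfold Rmin, Rmax. destruct (Rle_dec a b); nra. }
  assert (Hmm : Rmin a b <= Rmax a b) by (unfold Rmin, Rmax; destruct (Rle_dec a b); lra).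
  destruct (IVT_cor D _ _ HD Hmm Hab) as [z [_ Hz]].
  exists z. unfold D in Hz. lra.
Qed.

Section RationalRotation.

Variables (q : nat) (P : Z).
Hypothesis rotation_P_q : has_rotation_limit f (IZR P / INR q).
Hypothesis q_pos : (0 < q)%nat.
Hypothesis q_P_coprime : Z.gcd (Z.of_nat q) P = 1%Z.

Local Notation periodic := (periodic_pt f q P).
Local Notation gap := (periodic_gap f q P).

Lemma period_multiple k x m : (0 < k)%nat -> it k x = x + IZR m -> Nat.divide q k.
Proof.
  intros Hk Hx. pose proof (rotation_of_periodic _ _ _ _ rotation_P_q Hk Hx) as E.
  assert (0 < INR q) by (apply lt_0_INR; lia). assert (0 < INR k) by (apply lt_0_INR; lia).
  assert (EZ : (P * Z.of_nat k = m * Z.of_nat q)%Z).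
  { apply eq_IZR. rewrite !mult_IZR, <- !INR_IZR_INZ.
    replace (IZR P) with (IZR P / INR q * INR q) by (field; lra). rewrite E. field. lra. }
  apply Nat_divide_of_Z, (Z.gauss _ P); [exists m; lia | exact q_P_coprime].
Qed.

Lemma no_period_below k x m : (0 < k < q)%nat -> it k x <> x + IZR m.
Proof. intros Hk Hx. destruct (period_multiple k x m ltac:(lia) Hx) as [[|c] Hc]; lia. Qed.

Lemma periodic_of_return k x m : (0 < k)%nat -> it k x = x + IZR m -> periodic x.
Proof.
  intros Hk Hx. destruct (period_multiple k x m Hk Hx) as [t ->].
  assert (0 < INR q) by (apply lt_0_INR; lia). assert (Ht : (0 < t)%nat) by nia.
  assert (0 < INR t) by (apply lt_0_INR; lia).
  pose proof (rotation_of_periodic _ _ _ _ rotation_P_q Hk Hx) as E. rewrite mult_INR in E.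
  apply (periodic_of_iter_mul q t x P Ht). rewrite Hx.
  replace (IZR m) with (IZR m / (INR t * INR q) * (INR t * INR q)) by (field; lra).
  rewrite <- E. field. lra.
Qed.

Lemma periodic_add_int z k : periodic z -> periodic (z + IZR k).
Proof. unfold periodic_pt. intros Hz. rewrite iter_add_int, Hz. ring. Qed.

Lemma periodic_iter j z : periodic (it j z) <-> periodic z.
Proof.
  unfold periodic_pt.
  replace (it q (it j z)) with (it j (it q z)) by (rewrite <- !Nat.iter_add, Nat.add_comm; reflexivity).
  rewrite <- iter_add_int. split; [apply iter_inj | intros ->; reflexivity].
Qed.

Lemma gap_unique u v u' v' z :
  gap u v -> gap u' v' -> u < z < v -> u' < z < v' -> u = u' /\ v = v'.
Proof.
  intros [Huv [Hu [Hv Hint]]] [Huv' [Hu' [Hv' Hint']]] Hz Hz'.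
  destruct (Rtotal_order u u') as [Hlt|[Heq|Hgt]].
  - exfalso. apply (Hint u'); [lra | exact Hu'].
  - split; [exact Heq|]. destruct (Rtotal_order v v') as [Hlt|[Heq'|Hgt]]; [|exact Heq'|]; exfalso.
    + apply (Hint' v); [lra | exact Hv].
    + apply (Hint v'); [lra | exact Hv'].
  - exfalso. apply (Hint' u); [lra | exact Hu].
Qed.

Lemma gap_exists z0 x : periodic z0 -> ~ periodic x ->
  exists u v, u < x < v /\ gap u v /\ v - u <= 1.
Proof.
  intros Hz0 Hx. set (D z := it q z - z - IZR P).
  assert (HD : continuity D).
  { apply continuity_minus; [apply continuity_minus; [apply iter_cont | apply derivable_continuous, derivable_id]|].
    apply derivable_continuous, derivable_const. }
  assert (Hper : forall z, periodic z <-> D z = 0) by (intros z; unfold periodic_pt, D; split; intros; lra).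
  destruct (int_floor_exists (x - z0)) as [k Hk].
  destruct (continuity_last_zero_below D x HD) as [u [Hux [Hu Hbelow]]].
  { exists (z0 + IZR k). split; [lra|]. apply Hper, periodic_add_int, Hz0. }
  destruct (continuity_first_zero_above D x HD) as [v [Hxv [Hv Habove]]].
  { exists (z0 + IZR (k + 1)). rewrite plus_IZR at 1. split; [lra|]. apply Hper, periodic_add_int, Hz0. }
  assert (Hu' : u <> x) by (intros <-; apply Hx, Hper, Hu).
  assert (Hv' : v <> x) by (intros ->; apply Hx, Hper, Hv).
  assert (Hgap : gap u v).
  { repeat split; [lra | apply Hper, Hu | apply Hper, Hv |].
    intros z Hz Hpz. apply Hper in Hpz.
    destruct (Rle_or_lt z x); [apply (Hbelow z) | apply (Habove z)]; auto; lra. }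
  exists u, v. split; [lra|]. split; [exact Hgap|].
  destruct (Rle_or_lt (v - u) 1) as [|Hlong]; [assumption|]. exfalso.
  destruct Hgap as [_ [Hpu [_ Hint]]]. apply (Hint (u + IZR 1)); [simpl; lra|].
  apply periodic_add_int, Hpu.
Qed.

Lemma gap_iter j u v : gap u v -> gap (it j u) (it j v).
Proof.
  intros [Huv [Hu [Hv Hint]]]. repeat split.
  - apply iter_incr, Huv.
  - apply periodic_iter, Hu.
  - apply periodic_iter, Hv.
  - intros w Hw Hpw.
    assert (Hsign : (it j u - w) * (it j v - w) <= 0) by nra.
    destruct (IVT_cor (fun z => it j z - w) u v) as [z [Hz Ez]]; [|lra|exact Hsign|].
    { apply continuity_minus; [apply iter_cont | apply derivable_continuous, derivable_const]. }
    assert (Hzw : it j z = w) by lra. subst w.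
    apply (Hint z); [|now apply periodic_iter in Hpw].
    split; destruct Hz as [[Hz1|Hz1] [Hz2|Hz2]]; subst; lra.
Qed.

Lemma gap_add_int u v k : gap u v -> gap (u + IZR k) (v + IZR k).
Proof.
  intros [Huv [Hu [Hv Hint]]]. repeat split; [lra | now apply periodic_add_int | now apply periodic_add_int |].
  intros z Hz Hpz. apply (Hint (z + IZR (- k))); [rewrite opp_IZR; lra|].
  now apply periodic_add_int.
Qed.

Lemma gap_orbit_separation_le u v z z' j j' m :
  gap u v -> v - u <= 1 -> u < z < v -> u < z' < v -> (j' <= j < q)%nat ->
  it j z = it j' z' + IZR m -> j = j' /\ z = z'.
Proof.
  intros Hgap Hlen Hz Hz' Hj E.
  replace j with (j' + (j - j'))%nat in E by lia.
  rewrite Nat.iter_add, <- iter_add_int in E. apply iter_inj in E.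
  destruct (gap_unique _ _ _ _ (it (j - j') z) (gap_iter (j - j') u v Hgap) (gap_add_int u v m Hgap))
    as [Eu _]; [split; apply iter_incr; lra | lra |].
  destruct (Nat.eq_dec (j - j') 0) as [Hd|Hd].
  - rewrite Hd in E. simpl in E.
    assert (m = 0%Z) by (apply IZR_abs_lt_1; lra). subst m.
    split; [lia | simpl in E; lra].
  - exfalso. destruct Hgap as [_ [Hu _]].
    apply (no_period_below (j - j') u m); [lia | exact Eu].
Qed.

Lemma gap_orbit_separation u v z z' j j' m :
  gap u v -> v - u <= 1 -> u < z < v -> u < z' < v -> (j < q)%nat -> (j' < q)%nat ->
  it j z = it j' z' + IZR m -> j = j' /\ z = z'.
Proof.
  intros Hgap Hlen Hz Hz' Hj Hj' E. destruct (Nat.le_gt_cases j' j).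
  - apply (gap_orbit_separation_le u v z z' j j' m); auto.
  - destruct (gap_orbit_separation_le u v z' z j' j (- m)) as [-> ->]; auto; [lia|].
    rewrite E, opp_IZR. ring.
Qed.

End RationalRotation.

End DegreeOneLift.

(** * The piecewise-linear lift *)

Section PiecewiseLinearLift.

Variables L b0 b1 : R.
Hypothesis L_gt_1 : 1 < L.
Hypothesis b1_lt_b0 : b1 < b0.
(* L, b0, b1 stand for Lam, a0, a1.  The pieces [b1, b0] (slope 1/L) and
   [b0, b1 + 1] (slope L) exchange their lengths; this makes the lift
   continuous and of degree one. *)
Hypothesis pieces_exchange : b0 - b1 = L * (1 - b0 + b1).

Definition pl_piece (y : R) : R :=
  if Rle_dec y b0 then - b1 + (y - b1) / L else 1 - b0 + L * (y - b0).

Definition pl_lift (x : R) : R :=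
  let n := floorR (x - b1) in pl_piece (x - n) + n.

Local Notation it n := (Nat.iter n pl_lift).

Lemma b0_lt_b1_1 : b0 < b1 + 1.
Proof. nra. Qed.

Lemma left_piece_image : (b0 - b1) / L = 1 - b0 + b1.
Proof. rewrite pieces_exchange. field. lra. Qed.

Lemma pl_lift_add_int x k : pl_lift (x + IZR k) = pl_lift x + IZR k.
Proof.
  unfold pl_lift. replace (x + IZR k - b1) with (x - b1 + IZR k) by ring.
  rewrite floorR_add_int. replace (x + IZR k - (floorR (x - b1) + IZR k)) with (x - floorR (x - b1)) by ring.
  ring.
Qed.

Lemma pl_lift_cell n x : b1 + IZR n <= x < b1 + IZR n + 1 -> pl_lift x = pl_piece (x - IZR n) + IZR n.
Proof. intros Hx. unfold pl_lift. rewrite (floorR_unique n) by lra. reflexivity. Qed.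

Lemma pl_lift_left n x : b1 + IZR n <= x <= b0 + IZR n ->
  pl_lift x = - b1 + (x - IZR n - b1) / L + IZR n.
Proof.
  intros Hx. pose proof b0_lt_b1_1. rewrite (pl_lift_cell n) by lra.
  unfold pl_piece. destruct (Rle_dec (x - IZR n) b0); [ring | lra].
Qed.

Lemma pl_lift_right n x : b0 + IZR n <= x <= b1 + IZR n + 1 ->
  pl_lift x = 1 - b0 + L * (x - IZR n - b0) + IZR n.
Proof.
  intros Hx. pose proof b0_lt_b1_1. pose proof left_piece_image.
  destruct (Req_dec x (b1 + IZR n + 1)) as [->|Hx1].
  - rewrite (pl_lift_cell (n + 1)) by (rewrite plus_IZR; lra).
    unfold pl_piece. rewrite plus_IZR.
    destruct (Rle_dec (b1 + IZR n + 1 - (IZR n + 1)) b0); [|lra].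
    replace (L * (b1 + IZR n + 1 - IZR n - b0)) with (b0 - b1) by lra. field. lra.
  - rewrite (pl_lift_cell n) by lra. unfold pl_piece.
    destruct (Rle_dec (x - IZR n) b0); [|ring].
    replace x with (b0 + IZR n) by lra. replace (b0 + IZR n - IZR n - b1) with (b0 - b1) by ring.
    lra.
Qed.

Lemma pl_cell x : exists n : Z, b1 + IZR n <= x < b0 + IZR n \/ b0 + IZR n <= x < b1 + IZR n + 1.
Proof.
  destruct (int_floor_exists (x - b1)) as [n Hn]. exists n.
  destruct (Rlt_or_le x (b0 + IZR n)); [left | right]; lra.
Qed.

Lemma pl_cell_left x : exists n : Z, b1 + IZR n < x <= b0 + IZR n \/ b0 + IZR n < x <= b1 + IZR n + 1.
Proof.
  destruct (int_ceil_exists (x - b1)) as [n Hn]. exists n.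
  destruct (Rle_or_lt x (b0 + IZR n)); [left | right]; lra.
Qed.

Lemma pl_lift_b0 : pl_lift b0 = 1 - b0.
Proof.
  rewrite (pl_lift_left 0) by (simpl; lra). rewrite Rminus_0_r, left_piece_image. simpl. ring.
Qed.

Lemma pl_lift_b1 : pl_lift b1 = - b1.
Proof. rewrite (pl_lift_left 0) by (simpl; lra). simpl. field. lra. Qed.

Lemma pl_lift_reversible x : pl_lift (- pl_lift x) = - x.
Proof.
  pose proof b0_lt_b1_1. pose proof left_piece_image.
  destruct (pl_cell x) as [n [Hx|Hx]].
  - rewrite (pl_lift_left n x) by lra.
    assert (0 <= (x - IZR n - b1) / L <= (b0 - b1) / L).
    { assert (0 < / L) by (apply Rinv_0_lt_compat; lra). unfold Rdiv. split; nra. }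
    rewrite (pl_lift_right (- n - 1)) by (rewrite minus_IZR, opp_IZR; lra).
    rewrite minus_IZR, opp_IZR.
    assert (L * ((x - IZR n - b1) / L) = x - IZR n - b1) by (field; lra). lra.
  - rewrite (pl_lift_right n x) by lra.
    assert (0 <= L * (x - IZR n - b0) <= L * (1 - b0 + b1)) by (split; [apply Rmult_le_pos | apply Rmult_le_compat_l]; lra).
    rewrite (pl_lift_left (- n - 1)) by (rewrite minus_IZR, opp_IZR; lra).
    rewrite minus_IZR, opp_IZR.
    replace ((- (1 - b0 + L * (x - IZR n - b0) + IZR n) - (- IZR n - 1) - b1) / L)
      with ((b0 - b1) / L - (x - IZR n - b0)) by (field; lra).
    lra.
Qed.

Lemma pl_lift_slope_bounds_cell n x y : b1 + IZR n <= x <= y -> y <= b1 + IZR n + 1 ->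
  (y - x) / L <= pl_lift y - pl_lift x <= L * (y - x).
Proof.
  intros Hx Hy. pose proof b0_lt_b1_1. pose proof left_piece_image.
  assert (0 < / L) by (apply Rinv_0_lt_compat; lra).
  assert (L * / L = 1) by (field; lra).
  unfold Rdiv in *.
  destruct (Rle_or_lt y (b0 + IZR n)) as [Hy0|Hy0].
  { rewrite (pl_lift_left n x), (pl_lift_left n y) by lra. split; nra. }
  destruct (Rle_or_lt (b0 + IZR n) x) as [Hx0|Hx0].
  { rewrite (pl_lift_right n x), (pl_lift_right n y) by lra. split; nra. }
  rewrite (pl_lift_left n x), (pl_lift_right n y) by lra.
  split; nra.
Qed.

Lemma pl_lift_slope_bounds x y : x <= y -> (y - x) / L <= pl_lift y - pl_lift x <= L * (y - x).
Proof.
  intros Hxy.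
  assert (Hshort : forall x y, x <= y <= x + 1 -> (y - x) / L <= pl_lift y - pl_lift x <= L * (y - x)).
  { clear x y Hxy. intros x y Hxy.
    destruct (int_floor_exists (x - b1)) as [n Hn].
    destruct (Rle_or_lt y (b1 + IZR n + 1)) as [Hy|Hy]; [apply (pl_lift_slope_bounds_cell n); lra|].
    pose proof (pl_lift_slope_bounds_cell n x (b1 + IZR n + 1) ltac:(lra) ltac:(lra)).
    pose proof (pl_lift_slope_bounds_cell (n + 1) (b1 + IZR n + 1) y) as H2.
    rewrite plus_IZR in H2. specialize (H2 ltac:(lra) ltac:(lra)).
    replace ((y - x) / L) with ((b1 + IZR n + 1 - x) / L + (y - (b1 + IZR n + 1)) / L) by (field; lra).
    lra. }
  destruct (int_floor_exists (y - x)) as [k Hk].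
  assert (0 <= IZR k) by (apply IZR_le; enough (-1 < k)%Z by lia; apply lt_IZR; lra).
  pose proof (Hshort x (y - IZR k) ltac:(lra)).
  replace (pl_lift y) with (pl_lift (y - IZR k) + IZR k) by (rewrite <- pl_lift_add_int; f_equal; ring).
  assert (0 < / L) by (apply Rinv_0_lt_compat; lra).
  assert (L * / L = 1) by (field; lra).
  assert (IZR k / L <= IZR k <= L * IZR k) by (unfold Rdiv; split; nra).
  replace ((y - x) / L) with ((y - IZR k - x) / L + IZR k / L) by (field; lra).
  lra.
Qed.

Lemma pl_lift_incr x y : x < y -> pl_lift x < pl_lift y.
Proof.
  intros Hxy. pose proof (pl_lift_slope_bounds x y ltac:(lra)).
  assert (0 < (y - x) / L) by (apply Rdiv_lt_0_compat; lra). lra.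
Qed.

Lemma pl_lift_cont : continuity pl_lift.
Proof.
  apply (lipschitz_continuity _ L); [lra|]. intros x y.
  destruct (Rle_or_lt x y) as [Hxy|Hxy].
  - pose proof (pl_lift_slope_bounds x y Hxy). assert (0 <= (y - x) / L) by (apply Rle_mult_inv_pos; lra).
    rewrite !Rabs_left1 by lra. lra.
  - pose proof (pl_lift_slope_bounds y x ltac:(lra)). assert (0 <= (x - y) / L) by (apply Rle_mult_inv_pos; lra).
    rewrite !Rabs_right by lra. lra.
Qed.

Let it_add_int := iter_add_int pl_lift_add_int.
Let it_incr := iter_incr pl_lift_incr.

Definition pl_invol (x : R) : R := - pl_lift x.

Lemma pl_invol_invol x : pl_invol (pl_invol x) = x.
Proof. unfold pl_invol. rewrite pl_lift_reversible. ring. Qed.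

Lemma pl_invol_add_int x k : pl_invol (x + IZR k) = pl_invol x - IZR k.
Proof. unfold pl_invol. rewrite pl_lift_add_int. ring. Qed.

Lemma pl_invol_decr x y : x < y -> pl_invol y < pl_invol x.
Proof. unfold pl_invol. intros Hxy. pose proof (pl_lift_incr x y Hxy). lra. Qed.

Lemma pl_invol_b0 : pl_invol b0 = b0 - 1.
Proof. unfold pl_invol. rewrite pl_lift_b0. ring. Qed.

Lemma pl_invol_b1 : pl_invol b1 = b1.
Proof. unfold pl_invol. rewrite pl_lift_b1. ring. Qed.

Lemma iter_pl_invol k x : it k (pl_invol (it k x)) = pl_invol x.
Proof.
  revert x. induction k as [|k IH]; intros x; [reflexivity|].
  rewrite Nat.iter_succ_r. change (it (S k) x) with (pl_lift (it k x)).
  unfold pl_invol at 1. rewrite pl_lift_reversible. apply IH.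
Qed.

Definition breakpoint (y : R) : Prop :=
  (exists n : Z, y = b0 + IZR n) \/ (exists n : Z, y = b1 + IZR n).

Lemma b0_ne_b1_add_int n : b0 <> b1 + IZR n.
Proof.
  intros E. pose proof b0_lt_b1_1.
  assert (0 < IZR n < 1) as [H1 H2] by lra. apply lt_IZR in H1. apply lt_IZR in H2. lia.
Qed.

Lemma breakpoint_of_invol_shift y k : pl_invol y = y + IZR k -> breakpoint y.
Proof.
  unfold pl_invol. intros Hy. pose proof b0_lt_b1_1. pose proof left_piece_image.
  assert (0 < / L) by (apply Rinv_0_lt_compat; lra).
  assert (L * / L = 1) by (field; lra).
  destruct (pl_cell y) as [n [Hn|Hn]].
  - right. exists n. rewrite (pl_lift_left n y) in Hy by lra.
    remember (y - IZR n - b1) as t eqn:Ht.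
    assert (Ek : t / L + t = IZR (- k - 2 * n)) by (rewrite minus_IZR, mult_IZR, opp_IZR; simpl; lra).
    assert (Hlt : t / L < (b0 - b1) / L) by (unfold Rdiv; apply Rmult_lt_compat_r; lra).
    assert (Hk : (- k - 2 * n = 0)%Z) by (apply IZR_abs_lt_1; unfold Rdiv in *; split; nra).
    rewrite Hk in Ek. simpl in Ek. unfold Rdiv in Ek. assert (t = 0) by nra. lra.
  - left. exists n. rewrite (pl_lift_right n y) in Hy by lra.
    remember (y - IZR n - b0) as t eqn:Ht.
    assert (Ek : L * t + t = IZR (- k - 2 * n - 1)) by (rewrite !minus_IZR, mult_IZR, opp_IZR; simpl; lra).
    assert (Hlt : L * t < L * (1 - b0 + b1)) by (apply Rmult_lt_compat_l; lra).
    assert (Hk : (- k - 2 * n - 1 = 0)%Z) by (apply IZR_abs_lt_1; split; nra).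
    rewrite Hk in Ek. simpl in Ek. assert (t = 0) by nra. lra.
Qed.

Lemma pl_lift_right_germ y : right_germ pl_lift y L \/ right_germ pl_lift y (/ L).
Proof.
  pose proof b0_lt_b1_1. destruct (pl_cell y) as [n [Hn|Hn]].
  - right. exists (b0 + IZR n - y). split; [lra|]. intros z Hz.
    rewrite (pl_lift_left n z), (pl_lift_left n y) by lra. field. lra.
  - left. exists (b1 + IZR n + 1 - y). split; [lra|]. intros z Hz.
    rewrite (pl_lift_right n z), (pl_lift_right n y) by lra. ring.
Qed.

Lemma pl_lift_left_germ y : left_germ pl_lift y L \/ left_germ pl_lift y (/ L).
Proof.
  pose proof b0_lt_b1_1. destruct (pl_cell_left y) as [n [Hn|Hn]].
  - right. exists (y - (b1 + IZR n)). split; [lra|]. intros z Hz.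
    rewrite (pl_lift_left n z), (pl_lift_left n y) by lra. field. lra.
  - left. exists (y - (b0 + IZR n)). split; [lra|]. intros z Hz.
    rewrite (pl_lift_right n z), (pl_lift_right n y) by lra. ring.
Qed.

Lemma pl_lift_germ_regular y : ~ breakpoint y ->
  exists s, 0 < s /\ right_germ pl_lift y s /\ left_germ pl_lift y s.
Proof.
  intros Hy. pose proof b0_lt_b1_1. destruct (pl_cell y) as [n [Hn|Hn]].
  - assert (b1 + IZR n <> y) by (intros E; apply Hy; right; exists n; lra).
    exists (/ L). split; [apply Rinv_0_lt_compat; lra|].
    split; [exists (b0 + IZR n - y) | exists (y - (b1 + IZR n))]; (split; [lra|]);
      intros z Hz; rewrite (pl_lift_left n z), (pl_lift_left n y) by lra; field; lra.
  - assert (b0 + IZR n <> y) by (intros E; apply Hy; left; exists n; lra).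
    exists L. split; [lra|].
    split; [exists (b1 + IZR n + 1 - y) | exists (y - (b0 + IZR n))]; (split; [lra|]);
      intros z Hz; rewrite (pl_lift_right n z), (pl_lift_right n y) by lra; ring.
Qed.

Lemma pl_lift_germs_b0 : left_germ pl_lift b0 (/ L) /\ right_germ pl_lift b0 L.
Proof.
  pose proof b0_lt_b1_1. split.
  - exists (b0 - b1). split; [lra|]. intros z Hz.
    rewrite (pl_lift_left 0 z), (pl_lift_left 0 b0) by (simpl; lra). field. lra.
  - exists (b1 + 1 - b0). split; [lra|]. intros z Hz.
    rewrite (pl_lift_right 0 z), (pl_lift_right 0 b0) by (simpl; lra). ring.
Qed.

Lemma pl_lift_germs_b1 n : left_germ pl_lift (b1 + IZR n) L /\ right_germ pl_lift (b1 + IZR n) (/ L).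
Proof.
  pose proof b0_lt_b1_1. split.
  - exists (b1 + 1 - b0). split; [lra|]. intros z Hz.
    rewrite (pl_lift_right (n - 1) z), (pl_lift_right (n - 1) (b1 + IZR n)) by (rewrite minus_IZR; lra).
    ring.
  - exists (b0 - b1). split; [lra|]. intros z Hz.
    rewrite (pl_lift_left n z), (pl_lift_left n (b1 + IZR n)) by lra. field. lra.
Qed.

Lemma pl_lift_affine_on t t' : t < t' -> (forall w, t < w < t' -> ~ breakpoint w) ->
  exists s, 0 < s /\ affine_on pl_lift t t' s.
Proof.
  intros Htt Hw. pose proof b0_lt_b1_1. destruct (pl_cell t) as [n [Hn|Hn]].
  - assert (t' <= b0 + IZR n).
    { destruct (Rle_or_lt t' (b0 + IZR n)) as [|Hlt]; [assumption|].
      exfalso. apply (Hw (b0 + IZR n)); [lra | left; exists n; reflexivity]. }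
    exists (/ L). split; [apply Rinv_0_lt_compat; lra|]. intros z Hz.
    rewrite (pl_lift_left n z), (pl_lift_left n t) by lra. field. lra.
  - assert (t' <= b1 + IZR n + 1).
    { destruct (Rle_or_lt t' (b1 + IZR n + 1)) as [|Hlt]; [assumption|].
      exfalso. apply (Hw (b1 + IZR (n + 1))); [rewrite plus_IZR; lra | right; exists (n + 1)%Z; reflexivity]. }
    exists L. split; [lra|]. intros z Hz.
    rewrite (pl_lift_right n z), (pl_lift_right n t) by lra. ring.
Qed.

Lemma pow_ratio_inj a b c d : L ^ a / L ^ b = L ^ c / L ^ d -> (a + d = b + c)%nat.
Proof.
  intros E. assert (0 < L ^ b) by (apply pow_lt; lra). assert (0 < L ^ d) by (apply pow_lt; lra).
  assert (E' : L ^ (a + d) = L ^ (b + c)).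
  { rewrite !pow_add. transitivity (L ^ a / L ^ b * (L ^ b * L ^ d)); [field; lra|].
    rewrite E. field. lra. }
  destruct (Nat.lt_total (a + d) (b + c)) as [Hlt|[Heq|Hgt]]; [|exact Heq|];
    [pose proof (Rlt_pow L _ _ L_gt_1 Hlt) | pose proof (Rlt_pow L _ _ L_gt_1 Hgt)]; lra.
Qed.

Lemma iter_right_germ n t : exists a b, (a + b = n)%nat /\ right_germ (it n) t (L ^ a / L ^ b).
Proof.
  induction n as [|n [a [b [Hab Hg]]]].
  - exists 0%nat, 0%nat. split; [reflexivity|]. exists 1. split; [lra|]. intros z _. simpl. field.
  - assert (0 < L ^ a / L ^ b) by (apply Rdiv_lt_0_compat; apply pow_lt; lra).
    destruct (pl_lift_right_germ (it n t)) as [HL|HL];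
      pose proof (right_germ_comp _ _ _ _ _ H Hg HL) as Hc.
    + exists (S a), b. split; [lia|]. replace (L ^ S a / L ^ b) with (L * (L ^ a / L ^ b)) by (simpl; field; apply pow_nonzero; lra).
      exact Hc.
    + exists a, (S b). split; [lia|]. replace (L ^ a / L ^ S b) with (/ L * (L ^ a / L ^ b)) by (simpl; field; split; [apply pow_nonzero|]; lra).
      exact Hc.
Qed.

Lemma iter_left_germ n t : exists s, 0 < s /\ left_germ (it n) t s.
Proof.
  induction n as [|n [s [Hs Hg]]].
  - exists 1. split; [lra|]. exists 1. split; [lra|]. intros z _. simpl. ring.
  - destruct (pl_lift_left_germ (it n t)) as [HL|HL];
      pose proof (left_germ_comp _ _ _ _ _ Hs Hg HL) as Hc; eexists; (split; [|exact Hc]).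
    + nra.
    + assert (0 < / L) by (apply Rinv_0_lt_compat; lra). nra.
Qed.

Lemma iter_germ_regular n t : (forall j, (j < n)%nat -> ~ breakpoint (it j t)) ->
  exists c, 0 < c /\ right_germ (it n) t c /\ left_germ (it n) t c.
Proof.
  induction n as [|n IH]; intros Hreg.
  - exists 1. repeat split; [lra | exists 1 .. ]; (split; [lra | intros z _; simpl; ring]).
  - destruct IH as [c [Hc [Hr Hl]]]; [intros j Hj; apply Hreg; lia|].
    destruct (pl_lift_germ_regular (it n t)) as [s [Hs [Hsr Hsl]]]; [apply Hreg; lia|].
    exists (s * c). split; [nra|].
    split; [exact (right_germ_comp _ _ _ _ _ Hc Hr Hsr) | exact (left_germ_comp _ _ _ _ _ Hc Hl Hsl)].
Qed.

Lemma iter_germ_one_break n j0 t sl sr :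
  (j0 < n)%nat -> (forall j, (j < n)%nat -> j <> j0 -> ~ breakpoint (it j t)) ->
  0 < sl -> 0 < sr -> left_germ pl_lift (it j0 t) sl -> right_germ pl_lift (it j0 t) sr ->
  exists c, 0 < c /\ left_germ (it n) t (c * sl) /\ right_germ (it n) t (c * sr).
Proof.
  intros Hj0 Hreg Hsl Hsr Hl Hr.
  destruct (iter_germ_regular j0 t) as [c1 [Hc1 [Hr1 Hl1]]]; [intros j Hj; apply Hreg; lia|].
  destruct (iter_germ_regular (n - S j0) (it (S j0) t)) as [c2 [Hc2 [Hr2 Hl2]]].
  { intros j Hj. rewrite <- Nat.iter_add. apply Hreg; lia. }
  assert (Hsplit : forall z, it (n - S j0) (it (S j0) z) = it n z).
  { intros z. rewrite <- Nat.iter_add. f_equal. lia. }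
  exists (c2 * c1). split; [nra|]. split.
  - pose proof (left_germ_comp _ _ _ _ _ Hc1 Hl1 Hl) as H1.
    pose proof (left_germ_comp _ _ _ (sl * c1) _ ltac:(nra) H1 Hl2) as H2.
    replace (c2 * c1 * sl) with (c2 * (sl * c1)) by ring. exact (left_germ_ext _ _ _ _ Hsplit H2).
  - pose proof (right_germ_comp _ _ _ _ _ Hc1 Hr1 Hr) as H1.
    pose proof (right_germ_comp _ _ _ (sr * c1) _ ltac:(nra) H1 Hr2) as H2.
    replace (c2 * c1 * sr) with (c2 * (sr * c1)) by ring. exact (right_germ_ext _ _ _ _ Hsplit H2).
Qed.

Lemma iter_affine_on n x y : x < y ->
  (forall j z, (j < n)%nat -> x < z < y -> ~ breakpoint (it j z)) ->
  exists s, 0 < s /\ affine_on (it n) x y s.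
Proof.
  induction n as [|n IH]; intros Hxy Hreg.
  - exists 1. split; [lra|]. intros z _. simpl. ring.
  - destruct IH as [s [Hs Haff]]; [exact Hxy | intros j z Hj Hz; apply Hreg; [lia | exact Hz]|].
    pose proof (Haff y ltac:(lra)) as Hy.
    destruct (pl_lift_affine_on (it n x) (it n y)) as [s' [Hs' Haff']].
    { apply it_incr, Hxy. }
    { intros w Hw. set (z := x + (w - it n x) / s).
      assert (Ez : s * (z - x) = w - it n x) by (unfold z; field; lra).
      assert (Hz : x < z < y) by (split; nra).
      replace w with (it n z) by (rewrite (Haff z) by lra; lra).
      exact (Hreg n z ltac:(lia) Hz). }
    exists (s' * s). split; [nra|]. exact (affine_on_comp _ _ _ _ _ _ Hs Haff Haff').
Qed.

Lemma iter_odd_nowhere_translation q u v : Nat.Odd q -> u < v ->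
  exists x, u < x < v /\ ~ is_int (it q x - x).
Proof.
  intros Hodd Huv. destruct (iter_right_germ q u) as [a [b [Hab [d [Hd Hg]]]]].
  set (s := L ^ a / L ^ b) in *.
  assert (Hs1 : s <> 1).
  { intros E. apply (Nat.Even_Odd_False q); [|exact Hodd]. exists a.
    assert (a + 0 = b + 0)%nat by (apply pow_ratio_inj; fold s; rewrite E; simpl; field). lia. }
  assert (0 < s) by (apply Rdiv_lt_0_compat; apply pow_lt; lra).
  destruct (exists_pos_le3 d ((v - u) / 2) (1 / (s + 1))) as [e [He [He1 [He2 He3]]]];
    [lra | lra | apply Rdiv_lt_0_compat; lra |].
  assert (HeS : e * (s + 1) <= 1).
  { replace 1 with (1 / (s + 1) * (s + 1)) at 2 by (field; lra).
    apply Rmult_le_compat_r; lra. }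
  destruct (classic (is_int (it q (u + e) - (u + e)))) as [[k1 E1]|N1];
    [|exists (u + e); split; [lra | exact N1]].
  destruct (classic (is_int (it q (u + e / 2) - (u + e / 2)))) as [[k2 E2]|N2];
    [|exists (u + e / 2); split; [lra | exact N2]].
  exfalso. rewrite (Hg (u + e)) in E1 by lra. rewrite (Hg (u + e / 2)) in E2 by lra.
  assert (Ek : IZR (k1 - k2) = (s - 1) * (e / 2)) by (rewrite minus_IZR; lra).
  assert (Hk : (k1 - k2 = 0)%Z) by (apply IZR_abs_lt_1; rewrite Ek; split; nra).
  rewrite Hk in Ek. simpl in Ek. apply Hs1. nra.
Qed.

Section RationalRotationNumber.

Variables (q : nat) (P : Z).
Hypothesis rotation_P_q : has_rotation_limit pl_lift (IZR P / INR q).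
Hypothesis q_pos : (0 < q)%nat.
Hypothesis q_P_coprime : Z.gcd (Z.of_nat q) P = 1%Z.

Local Notation periodic := (periodic_pt pl_lift q P).
Local Notation gap := (periodic_gap pl_lift q P).

Let period_divides :=
  period_multiple pl_lift_incr pl_lift_add_int _ _ rotation_P_q q_pos q_P_coprime.
Let periodic_return :=
  periodic_of_return pl_lift_incr pl_lift_add_int _ _ rotation_P_q q_pos q_P_coprime.
Let no_short_period :=
  no_period_below pl_lift_incr pl_lift_add_int _ _ rotation_P_q q_pos q_P_coprime.
Let periodic_shift := periodic_add_int pl_lift_add_int q P.
Let periodic_along := periodic_iter pl_lift_incr pl_lift_add_int q P.
Let separation :=
  gap_orbit_separation pl_lift_incr pl_lift_add_int pl_lift_cont _ _ rotation_P_q q_pos q_P_coprime.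

Lemma b0_avoids_b1_odd : Nat.Odd q -> forall k (j : Z), it k b0 <> b1 + IZR j.
Proof.
  intros Hodd k j Hk.
  destruct (Nat.eq_dec k 0) as [->|Hk0]; [exact (b0_ne_b1_add_int j Hk)|].
  assert (Hb1 : it k b1 = b0 - 1 + IZR j).
  { pose proof (iter_pl_invol k b0) as R.
    rewrite Hk, pl_invol_add_int, pl_invol_b1, pl_invol_b0 in R.
    replace (b1 - IZR j) with (b1 + IZR (- j)) in R by (rewrite opp_IZR; ring).
    rewrite it_add_int, opp_IZR in R. lra. }
  assert (Hret : it (k + k) b0 = b0 + IZR (2 * j - 1)).
  { rewrite Nat.iter_add, Hk, it_add_int, Hb1, minus_IZR, mult_IZR. simpl. ring. }
  pose proof (periodic_return (k + k) b0 _ ltac:(lia) Hret) as Hper.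
  destruct (odd_divide_double q k Hodd (period_divides (k + k) b0 _ ltac:(lia) Hret)) as [t ->].
  pose proof (iter_mul_periodic pl_lift_add_int q b0 P t Hper) as E. rewrite Hk in E.
  apply (b0_ne_b1_add_int (j - Z.of_nat t * P)). rewrite minus_IZR, mult_IZR, <- INR_IZR_INZ. lra.
Qed.

Lemma pl_invol_periodic y : periodic y -> periodic (pl_invol y).
Proof.
  unfold periodic_pt. intros Hy. pose proof (iter_pl_invol q (y + IZR (- P))) as R.
  rewrite it_add_int, Hy in R. replace (y + IZR P + IZR (- P)) with y in R by (rewrite opp_IZR; ring).
  rewrite pl_invol_add_int, opp_IZR in R. lra.
Qed.

Lemma gap_invol u v : gap u v -> gap (pl_invol v) (pl_invol u).
Proof.
  intros [Huv [Hu [Hv Hint]]]. repeat split.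
  - apply pl_invol_decr, Huv.
  - apply pl_invol_periodic, Hv.
  - apply pl_invol_periodic, Hu.
  - intros z Hz Hpz. apply (Hint (pl_invol z)); [|now apply pl_invol_periodic].
    rewrite <- (pl_invol_invol u), <- (pl_invol_invol v).
    split; apply pl_invol_decr; lra.
Qed.

Definition hits_b1 (z : R) : Prop := exists j (n : Z), (j < q)%nat /\ it j z = b1 + IZR n.

Section GapAroundB0.

Variables u v : R.
Hypothesis gap_u_v : gap u v.
Hypothesis gap_short : v - u <= 1.
Hypothesis b0_in_gap : u < b0 < v.

Lemma gap_b0_symmetric : u = pl_invol v + 1 /\ v = pl_invol u + 1.
Proof.
  pose proof (gap_add_int pl_lift_add_int _ _ _ _ 1 (gap_invol u v gap_u_v)) as Hg.
  assert (pl_invol v < pl_invol b0 < pl_invol u) as Hb0 by (split; apply pl_invol_decr; lra).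
  rewrite pl_invol_b0 in Hb0. simpl in Hg.
  exact (gap_unique _ _ _ _ _ _ b0 gap_u_v Hg b0_in_gap ltac:(lra)).
Qed.

Lemma gap_b0_in_cell : b1 <= u /\ v <= b1 + 1.
Proof.
  destruct gap_b0_symmetric as [Eu Ev].
  assert (Hno : forall n : Z, ~ (u < b1 + IZR n < v)).
  { intros n Hn.
    assert (pl_invol v < pl_invol (b1 + IZR n) < pl_invol u) as Hi by (split; apply pl_invol_decr; lra).
    rewrite pl_invol_add_int, pl_invol_b1 in Hi.
    assert (Hn0 : (2 * n - 1 = 0)%Z) by (apply IZR_abs_lt_1; rewrite minus_IZR, mult_IZR; simpl; lra).
    lia. }
  pose proof b0_lt_b1_1. split.
  - destruct (Rle_or_lt b1 u) as [|Hlt]; [assumption|]. exfalso. apply (Hno 0%Z). simpl. lra.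
  - destruct (Rle_or_lt v (b1 + 1)) as [|Hlt]; [assumption|]. exfalso. apply (Hno 1%Z). simpl. lra.
Qed.

(* Read the reversibility identity F^q (G (F^q x)) = G x just to the right of
   x = u - P: G maps a right neighbourhood of u onto a left neighbourhood of
   v - 1 with slope -1/L. *)
Lemma gap_b0_endpoint_germs s s' : right_germ (it q) u s -> left_germ (it q) v s' -> s * s' = 1.
Proof.
  intros Hr [d2 [Hd2 H2]]. pose proof Hr as [d1 [Hd1 H1]].
  destruct gap_b0_symmetric as [Eu Ev]. destruct gap_b0_in_cell as [Hub1 Hvb1].
  destruct gap_u_v as [_ [Hpu [Hpv _]]]. unfold periodic_pt in Hpu, Hpv.
  assert (Hs : 0 < s) by exact (right_germ_incr_pos _ _ _ (it_incr q) Hr).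
  assert (Hinvol : forall z, u <= z <= b0 -> pl_invol z = v - 1 - (z - u) / L).
  { intros z Hz. unfold pl_invol in *. rewrite (pl_lift_left 0 u) in Ev by (simpl; lra).
    rewrite (pl_lift_left 0 z) by (simpl; lra). rewrite Ev. field. lra. }
  destruct (exists_pos_le3 d1 ((b0 - u) / (s + 1)) (L * d2 / s)) as [e [He [He1 [He2 He3]]]];
    [lra | apply Rdiv_lt_0_compat; lra | apply Rdiv_lt_0_compat; nra |].
  assert (Hse : e * (s + 1) <= b0 - u).
  { replace (b0 - u) with ((b0 - u) / (s + 1) * (s + 1)) by (field; lra).
    apply Rmult_le_compat_r; lra. }
  assert (HseL : 0 <= s * e / L <= d2).
  { assert (s * e <= L * d2).
    { replace (L * d2) with (s * (L * d2 / s)) by (field; lra). apply Rmult_le_compat_l; lra. }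
    assert (0 < / L) by (apply Rinv_0_lt_compat; lra). assert (L * / L = 1) by (field; lra).
    unfold Rdiv. split; nra. }
  pose proof (iter_pl_invol q (u + e + IZR (- P))) as R.
  rewrite pl_invol_add_int, (Hinvol (u + e)) in R by nra.
  rewrite it_add_int, (H1 (u + e)), Hpu, opp_IZR in R by lra.
  replace (u + IZR P + s * (u + e - u) + - IZR P) with (u + s * e) in R by ring.
  rewrite Hinvol in R by nra.
  replace (v - 1 - (u + s * e - u) / L) with (v - s * e / L + IZR (-1)) in R by (simpl; field; lra).
  rewrite it_add_int, (H2 (v - s * e / L)), Hpv in R by lra.
  apply (Rmult_eq_reg_r (e / L)); [|apply Rgt_not_eq, Rdiv_lt_0_compat; lra].
  transitivity (s' * (s * e / L)); [field; lra|]. simpl in R. lra.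
Qed.

Lemma gap_b0_hits_b1_unique z z' : u < z < v -> u < z' < v -> hits_b1 z -> hits_b1 z' -> z = z'.
Proof.
  intros Hz Hz' [j [n [Hj E]]] [j' [n' [Hj' E']]].
  refine (proj2 (separation u v z z' j j' (n - n') gap_u_v gap_short Hz Hz' Hj Hj' _)).
  rewrite E, E', minus_IZR. ring.
Qed.

Lemma gap_b0_transfer x y s s' : u <= x -> x < y -> y <= v -> ~ (x < b0 < y) ->
  (forall z, x < z < y -> ~ hits_b1 z) ->
  right_germ (it q) x s -> left_germ (it q) y s' -> s = s'.
Proof.
  intros Hx Hxy Hy Hb0 Hfree Hr Hl.
  destruct (iter_affine_on q x y Hxy) as [sigma [_ Haff]].
  { intros j z Hj Hz [[n E]|[n E]].
    - apply Hb0. replace b0 with z; [exact Hz|].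
      refine (proj2 (separation u v z b0 j 0 n gap_u_v gap_short _ b0_in_gap Hj q_pos E)). lra.
    - apply (Hfree z Hz). exists j, n. split; assumption. }
  rewrite (right_germ_unique _ _ _ _ Hr (affine_on_right_germ _ _ _ _ Hxy Haff)).
  exact (left_germ_unique _ _ _ _ (affine_on_left_germ _ _ _ _ Hxy Haff) Hl).
Qed.

Lemma gap_b0_jump_regular : ~ hits_b1 b0 ->
  exists c, 0 < c /\ left_germ (it q) b0 (c * / L) /\ right_germ (it q) b0 (c * L).
Proof.
  intros Hno. destruct pl_lift_germs_b0 as [Hl Hr].
  apply (iter_germ_one_break q 0 b0 (/ L) L q_pos); [| apply Rinv_0_lt_compat; lra | lra | exact Hl | exact Hr].
  intros j Hj Hj0 [[n E]|[n E]].
  - exact (Hj0 (proj1 (separation u v b0 b0 j 0 n gap_u_v gap_short b0_in_gap b0_in_gap Hj q_pos E))).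
  - apply Hno. exists j, n. split; assumption.
Qed.

Lemma gap_b0_jump_b1 t : u < t < v -> t <> b0 -> hits_b1 t ->
  exists c, 0 < c /\ left_germ (it q) t (c * L) /\ right_germ (it q) t (c * / L).
Proof.
  intros Ht Htb0 [j1 [n1 [Hj1 E1]]]. destruct (pl_lift_germs_b1 n1) as [Hl Hr]. rewrite <- E1 in Hl, Hr.
  apply (iter_germ_one_break q j1 t L (/ L) Hj1); [| lra | apply Rinv_0_lt_compat; lra | exact Hl | exact Hr].
  intros j Hj Hjj1 [[n E]|[n E]].
  - exact (Htb0 (proj2 (separation u v t b0 j 0 n gap_u_v gap_short Ht b0_in_gap Hj q_pos E))).
  - apply Hjj1. refine (proj1 (separation u v t t j j1 (n - n1) gap_u_v gap_short Ht Ht Hj Hj1 _)).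
    rewrite E, E1, minus_IZR. ring.
Qed.

Lemma gap_b0_jump_b0_b1 : hits_b1 b0 ->
  exists c, 0 < c /\ left_germ (it q) b0 c /\ right_germ (it q) b0 c.
Proof.
  intros [j1 [n1 [Hj1 E1]]].
  destruct j1 as [|j1]; [exfalso; exact (b0_ne_b1_add_int n1 E1)|].
  assert (Hsplit : forall z, it (q - 1) (pl_lift z) = it q z).
  { intros z. rewrite <- Nat.iter_succ_r. f_equal. lia. }
  destruct (pl_lift_germs_b1 n1) as [Hl1 Hr1]. rewrite <- E1, Nat.iter_succ_r in Hl1, Hr1.
  destruct (iter_germ_one_break (q - 1) j1 (pl_lift b0) L (/ L)) as [c [Hc [Hl Hr]]];
    [lia | | lra | apply Rinv_0_lt_compat; lra | exact Hl1 | exact Hr1 |].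
  { intros j Hj Hjj1 [[n E]|[n E]]; rewrite <- Nat.iter_succ_r in E.
    - pose proof (proj1 (separation u v b0 b0 (S j) 0 n gap_u_v gap_short b0_in_gap b0_in_gap
        ltac:(lia) q_pos E)). lia.
    - apply Hjj1. enough (S j = S j1) by lia.
      refine (proj1 (separation u v b0 b0 (S j) (S j1) (n - n1) gap_u_v gap_short b0_in_gap b0_in_gap
        ltac:(lia) Hj1 _)).
      rewrite E, E1, minus_IZR. ring. }
  destruct pl_lift_germs_b0 as [Hl0 Hr0].
  exists c. split; [exact Hc|]. split.
  - apply (left_germ_ext _ _ _ _ Hsplit). replace c with (c * L * / L) by (field; lra).
    exact (left_germ_comp _ _ _ (/ L) _ ltac:(apply Rinv_0_lt_compat; lra) Hl0 Hl).
  - apply (right_germ_ext _ _ _ _ Hsplit). replace c with (c * / L * L) by (field; lra).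
    exact (right_germ_comp _ _ _ L _ ltac:(lra) Hr0 Hr).
Qed.

Lemma gap_b0_slopes_b0_hits s s' : hits_b1 b0 ->
  right_germ (it q) u s -> left_germ (it q) v s' -> s = s'.
Proof.
  intros Hb0 Hu Hv. destruct (gap_b0_jump_b0_b1 Hb0) as [c [_ [Hl Hr]]].
  assert (Hfree : forall z, u < z < v -> z <> b0 -> ~ hits_b1 z).
  { intros z Hz Hzb0 Hz1. exact (Hzb0 (gap_b0_hits_b1_unique z b0 Hz b0_in_gap Hz1 Hb0)). }
  transitivity c.
  - apply (gap_b0_transfer u b0); try lra; [|assumption..]. intros z Hz. apply Hfree; lra.
  - apply (gap_b0_transfer b0 v); try lra; [|assumption..]. intros z Hz. apply Hfree; lra.
Qed.

Lemma gap_b0_slopes_other_hits s s' t : u < t < v -> t <> b0 -> hits_b1 t ->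
  right_germ (it q) u s -> left_germ (it q) v s' -> s = s'.
Proof.
  intros Ht Htb0 Hhit Hu Hv.
  assert (Hfree : forall z, u < z < v -> z <> t -> ~ hits_b1 z).
  { intros z Hz Hzt Hz1. exact (Hzt (gap_b0_hits_b1_unique z t Hz Ht Hz1 Hhit)). }
  destruct (gap_b0_jump_regular (Hfree b0 b0_in_gap (not_eq_sym Htb0))) as [c0 [_ [Hl0 Hr0]]].
  destruct (gap_b0_jump_b1 t Ht Htb0 Hhit) as [c1 [_ [Hl1 Hr1]]].
  destruct (Rlt_or_le t b0) as [Hlt|Hge].
  - assert (s = c1 * L) by (apply (gap_b0_transfer u t); try lra; [intros z Hz; apply Hfree; lra | assumption..]).
    assert (c1 * / L = c0 * / L) by (apply (gap_b0_transfer t b0); try lra; [intros z Hz; apply Hfree; lra | assumption..]).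
    assert (c0 * L = s') by (apply (gap_b0_transfer b0 v); try lra; [intros z Hz; apply Hfree; lra | assumption..]).
    assert (c1 = c0) by (apply (Rmult_eq_reg_r (/ L)); [lra | apply Rinv_neq_0_compat; lra]).
    subst. reflexivity.
  - assert (Htb : b0 < t) by lra.
    assert (s = c0 * / L) by (apply (gap_b0_transfer u b0); try lra; [intros z Hz; apply Hfree; lra | assumption..]).
    assert (c0 * L = c1 * L) by (apply (gap_b0_transfer b0 t); try lra; [intros z Hz; apply Hfree; lra | assumption..]).
    assert (c1 * / L = s') by (apply (gap_b0_transfer t v); try lra; [intros z Hz; apply Hfree; lra | assumption..]).
    assert (c0 = c1) by (apply (Rmult_eq_reg_r L); lra).
    subst. reflexivity.
Qed.

Lemma gap_b0_slopes_no_hits s s' : (forall t, u < t < v -> ~ hits_b1 t) ->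
  right_germ (it q) u s -> left_germ (it q) v s' -> s' = s * L * L.
Proof.
  intros Hno Hu Hv. destruct (gap_b0_jump_regular (Hno b0 b0_in_gap)) as [c [_ [Hl Hr]]].
  assert (s = c * / L) by (apply (gap_b0_transfer u b0); try lra; [intros z Hz; apply Hno; lra | assumption..]).
  assert (c * L = s') by (apply (gap_b0_transfer b0 v); try lra; [intros z Hz; apply Hno; lra | assumption..]).
  subst. field. lra.
Qed.

Lemma gap_b0_left_slope s : right_germ (it q) u s -> s = 1 \/ s * L = 1.
Proof.
  intros Hu. destruct (iter_left_germ q v) as [s' [_ Hv]].
  pose proof (gap_b0_endpoint_germs s s' Hu Hv) as Hss'.
  assert (Hs : 0 < s) by exact (right_germ_incr_pos _ _ _ (it_incr q) Hu).
  destruct (classic (exists t, u < t < v /\ hits_b1 t)) as [[t [Ht Hhit]]|Hno].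
  - left. assert (s = s').
    { destruct (Req_dec t b0) as [->|Htb0].
      - exact (gap_b0_slopes_b0_hits s s' Hhit Hu Hv).
      - exact (gap_b0_slopes_other_hits s s' t Ht Htb0 Hhit Hu Hv). }
    subst s'. nra.
  - right. assert (s' = s * L * L) as -> by (apply gap_b0_slopes_no_hits; [intros t Ht Hhit; apply Hno; exists t; split | |]; assumption).
    assert (0 < s * L) by nra. nra.
Qed.

End GapAroundB0.

Lemma b0_periodic_even : Nat.Even q -> periodic b0.
Proof.
  intros Hev. apply NNPP. intros Hb0.
  destruct (periodic_point_exists pl_lift_add_int pl_lift_cont _ _ rotation_P_q q_pos) as [z0 Hz0].
  destruct (gap_exists pl_lift_add_int pl_lift_cont q P z0 b0 Hz0 Hb0) as [u [v [Hb0uv [Hgap Hlen]]]].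
  destruct (iter_right_germ q u) as [a [b [Hab Hg]]].
  destruct (gap_b0_left_slope u v Hgap Hlen Hb0uv _ Hg) as [Hs|Hs].
  - destruct Hg as [d [Hd Hg]]. destruct Hgap as [Huv [Hpu [_ Hint]]].
    pose proof (Rmin_l d (v - u)). pose proof (Rmin_r d (v - u)).
    assert (0 < Rmin d (v - u)) by (apply Rmin_pos; lra).
    apply (Hint (u + Rmin d (v - u) / 2)); [lra|].
    unfold periodic_pt in *. rewrite Hg, Hs, Hpu by lra. ring.
  - apply (Nat.Even_Odd_False q Hev). exists a.
    assert (S a + 0 = b + 0)%nat; [|lia].
    apply pow_ratio_inj. transitivity 1; [rewrite <- Hs; simpl; field; apply pow_nonzero; lra | simpl; field].
Qed.

Lemma b0_reaches_b1_even : Nat.Even q -> exists h (n : Z), it h b0 = b1 + IZR n.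
Proof.
  intros Hev. pose proof (b0_periodic_even Hev) as Hb0. destruct Hev as [h Hh]. unfold periodic_pt in Hb0.
  exists h.
  assert (Hy : it h (it h b0) = b0 + IZR P).
  { rewrite <- Nat.iter_add. replace (h + h)%nat with q by lia. exact Hb0. }
  assert (Hinv : pl_invol (it h b0) = it h b0 + IZR (- P - 1)).
  { apply (iter_inj pl_lift_incr h). rewrite iter_pl_invol, pl_invol_b0, it_add_int, Hy, minus_IZR, opp_IZR.
    ring. }
  destruct (breakpoint_of_invol_shift _ _ Hinv) as [[n En]|[n En]].
  - exfalso. exact (no_short_period h b0 n ltac:(lia) En).
  - exists n. exact En.
Qed.

Lemma all_periodic_even : Nat.Even q -> forall x, periodic x.
Proof.
  intros Hev x. pose proof (b0_periodic_even Hev) as Hb0.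
  assert (Hbreak : forall y, breakpoint y -> periodic y).
  { destruct (b0_reaches_b1_even Hev) as [h [n Eh]].
    assert (Hb1 : periodic b1).
    { replace b1 with (b1 + IZR n + IZR (- n)) by (rewrite opp_IZR; ring).
      apply periodic_shift. rewrite <- Eh. apply periodic_along, Hb0. }
    intros y [[m ->]|[m ->]]; apply periodic_shift; assumption. }
  apply NNPP. intros Hx.
  destruct (gap_exists pl_lift_add_int pl_lift_cont q P b0 x Hb0 Hx) as [u [v [Hxuv [[Huv [Hu [Hv Hint]]] _]]]].
  destruct (iter_affine_on q u v Huv) as [s [_ Haff]].
  { intros j z Hj Hz Hbr. apply (Hint z Hz), (periodic_along j z), Hbreak, Hbr. }
  apply Hx. unfold periodic_pt in *.
  pose proof (Haff v ltac:(lra)) as Ev. rewrite Hu, Hv in Ev.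
  assert (s = 1) as Hs1 by (apply (Rmult_eq_reg_r (v - u)); lra).
  rewrite (Haff x), Hu, Hs1 by lra. ring.
Qed.

End RationalRotationNumber.

End PiecewiseLinearLift.

(** * The billiard map *)

Lemma pl_params_admissible theta alpha ell : admissible theta alpha ell ->
  1 < Lam theta alpha /\ a1 theta alpha ell < a0 theta ell /\
  a0 theta ell - a1 theta alpha ell = Lam theta alpha * (1 - a0 theta ell + a1 theta alpha ell).
Proof.
  intros [Hl [Ha [Hat [Htp _]]]].
  assert (Hct : 0 < cos theta) by (apply cos_gt_0; lra).
  assert (Hca : 0 < cos alpha) by (apply cos_gt_0; lra).
  assert (Hs : 0 < tan alpha) by (apply tan_gt_0; lra).
  assert (Hst : tan alpha < tan theta) by (apply tan_increasing; lra).
  set (t := tan theta) in *. set (s := tan alpha) in *.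
  assert (Et : sin theta = t * cos theta) by (unfold t, tan; field; lra).
  assert (Es : sin alpha = s * cos alpha) by (unfold s, tan; field; lra).
  assert (EL : Lam theta alpha = (t + s) / (t - s)).
  { unfold Lam. rewrite sin_plus, sin_minus, Et, Es. field. split; [lra|].
    assert (0 < cos theta * cos alpha * (t - s)) by (apply Rmult_lt_0_compat; [nra | lra]). nra. }
  unfold a0, a1. fold t s. rewrite EL. split; [|split].
  - apply (Rmult_lt_reg_r (t - s)); [lra|]. unfold Rdiv. rewrite Rmult_assoc, Rinv_l by lra. lra.
  - apply (Rmult_lt_reg_r (2 * t)); [lra|]. unfold Rdiv. rewrite !Rmult_assoc, Rinv_l by lra. lra.
  - field. lra.
Qed.

Lemma F_pl_lift theta alpha ell :
  F theta alpha ell = pl_lift (Lam theta alpha) (a0 theta ell) (a1 theta alpha ell).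
Proof. reflexivity. Qed.

Lemma rotation_number_limit theta alpha ell p q :
  rotation_number theta alpha ell (INR p / INR q) -> (0 < q)%nat ->
  exists N : Z, has_rotation_limit (F theta alpha ell) (IZR (Z.of_nat p + N * Z.of_nat q) / INR q).
Proof.
  intros [r [Hr Hrho]] Hq. exists (Int_part r). unfold has_rotation_limit.
  replace (IZR (Z.of_nat p + Int_part r * Z.of_nat q) / INR q) with r; [exact Hr|].
  assert (0 < INR q) by (apply lt_0_INR; lia).
  unfold floorR in Hrho. rewrite plus_IZR, mult_IZR, <- !INR_IZR_INZ.
  apply (Rmult_eq_reg_r (/ INR q)); [|apply Rinv_neq_0_compat; lra].
  replace r with (INR p / INR q + IZR (Int_part r)) at 1 by lra. field. lra.
Qed.

Lemma rotation_coprime p q (N : Z) :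
  (0 < p)%nat /\ (0 < q)%nat /\ Nat.gcd p q = 1%nat \/ (p = 0%nat /\ q = 1%nat) ->
  Z.gcd (Z.of_nat q) (Z.of_nat p + N * Z.of_nat q) = 1%Z.
Proof.
  rewrite Z.gcd_add_mult_diag_r. intros [[_ [_ Hpq]]|[-> ->]]; [|reflexivity].
  apply Zgcd_of_nat_coprime. rewrite Nat.gcd_comm. exact Hpq.
Qed.

Theorem proposition3p1 (theta alpha ell : R) (p q : nat) :
  admissible theta alpha ell ->
  ((0 < p)%nat /\ (0 < q)%nat /\ Nat.gcd p q = 1%nat \/ (p = 0%nat /\ q = 1%nat)) ->
  rotation_number theta alpha ell (INR p / INR q) ->
  (Nat.Even q ->
     (forall x, same_pt (Fiter theta alpha ell q x) x) /\
     (forall x (k : nat), (0 < k < q)%nat -> ~ same_pt (Fiter theta alpha ell k x) x) /\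
     (exists k : nat, same_pt (Fiter theta alpha ell k (a0 theta ell)) (a1 theta alpha ell))) /\
  (Nat.Odd q ->
     (forall u v, u < v ->
        exists x, u < x < v /\ ~ same_pt (Fiter theta alpha ell q x) x) /\
     ~ ((exists n : nat, (0 < n)%nat /\
           same_pt (Fiter theta alpha ell n (a0 theta ell)) (a0 theta ell)) /\
        (exists k : nat, same_pt (Fiter theta alpha ell k (a0 theta ell)) (a1 theta alpha ell)))).
Proof.
  intros Hadm Hpq Hrho.
  destruct (pl_params_admissible theta alpha ell Hadm) as [HL [Hb Hrel]].
  assert (Hq : (0 < q)%nat) by (destruct Hpq as [[_ [Hq _]]|[_ ->]]; lia).
  destruct (rotation_number_limit theta alpha ell p q Hrho Hq) as [N Hrot].
  pose proof (rotation_coprime p q N Hpq) as Hcop.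
  unfold Fiter, same_pt. rewrite F_pl_lift in *.
  split.
  - intros Hev. split; [|split].
    + intros x. exists (Z.of_nat p + N * Z.of_nat q)%Z.
      rewrite (all_periodic_even _ _ _ HL Hb Hrel _ _ Hrot Hq Hcop Hev x). ring.
    + intros x k Hk [m Hm].
      apply (no_period_below (pl_lift_incr _ _ _ HL Hb Hrel) (pl_lift_add_int _ _ _) _ _ Hrot Hq Hcop
        k x m Hk).
      lra.
    + destruct (b0_reaches_b1_even _ _ _ HL Hb Hrel _ _ Hrot Hq Hcop Hev) as [h [n Eh]].
      exists h, n. rewrite Eh. ring.
  - intros Hodd. split.
    + intros u v Huv. exact (iter_odd_nowhere_translation _ _ _ HL Hb Hrel q u v Hodd Huv).
    + intros [_ [k [j Hk]]]. apply (b0_avoids_b1_odd _ _ _ HL Hb Hrel _ _ Hrot Hq Hcop Hodd k j). lra.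
Qed.
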